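(* Let $K\subset S^3$ be a knot with Alexander module $H$. Let $k_1,k_2\geq1$ be coprime integers and let $\chi_i\colon H\to\mathbb C^*$ ($i=1,2$) be characters such that $\chi_i$ factors through $H/(t^{k_i}-1)H$. Then there is an isomorphism of representations of $\pi_K$ \[\alpha_{(k_1,\chi_1)}\otimes\alpha_{(k_2,\chi_2)}\cong \alpha_{(k_1k_2,\chi_1\chi_2)},\] where $\chi_1\chi_2$ denotes the pointwise product character (which factors through $H/(t^{k_1k_2}-1)H$).
   Context: For a knot $K$, $X_K=S^3\setminus\nu K$, $\pi_K=\pi_1(X_K)$, and $H=H_1(X_K;\mathbb Z[t^{\pm1}])$ is the Alexander module (the homology of the infinite cyclic cover, with $t$ acting by deck transformation). Then $\pi_K/\pi_K^{(2)}\cong\mathbb Z\ltimes H$, where $n\in\mathbb Z$ acts on $H$ by multiplication by $t^n$ (the generator of $\mathbb Z$ corresponding to a meridian). For $n\ge1$, a character $\chi\colon H\to\mathbb C^*$ factoring through $H/(t^n-1)H$, and $z\in\mathbb C$ with $z^n=(-1)^{n+1}$, define $\alpha_{(n,\chi)}\colon \mathbb Z\ltimes H\to \mathrm{SL}(n,\mathbb C)$ by \[\alpha_{(n,\chi)}(j,h)=P^j\cdot\mathrm{diag}\big(\chi(h),\chi(th),\dots,\chi(t^{n-1}h)\big),\] where $P$ is the $n\times n$ matrix with entries $z$ in positions $(1,n),(2,1),(3,2),\dots,(n,n-1)$ and $0$ elsewhere; its isomorphism type does not depend on the choice of $z$. It is regarded as a representation of $\pi_K$ via $\pi_K\to\pi_K/\pi_K^{(2)}\cong\mathbb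 Z\ltimes H$. *)

From HB Require Import structures.
From mathcomp Require Import all_boot all_order all_algebra.
Set Implicit Arguments. Unset Strict Implicit. Unset Printing Implicit Defensive.
Import Order.TTheory GRing.Theory Num.Theory.
Local Open Scope ring_scope.

(* A Z[t^{+-1}]-module H is modelled as an abelian group H (zmodType) together
   with an additive automorphism t (additive map with a two-sided inverse). *)
Definition laurent_module (H : zmodType) (t tinv : H -> H) : Prop :=
  [/\ forall a b, t (a + b) = t a + t b, cancel t tinv & cancel tinv t].

Definition tpow (H : Type) (t : H -> H) (i : nat) (h : H) : H := iter i t h.

Definition is_character (H : zmodType) (C : fieldType) (chi : H -> C) : Prop :=
  (forall a b, chi (a + b) = chi a * chi b) /\ (forall a, chi a != 0).

(* chi factors through H/(t^n - 1)H, i.e. chi is trivial on (t^n - 1)H *)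
Definition factors_through (H : zmodType) (C : fieldType) (t : H -> H)
    (n : nat) (chi : H -> C) : Prop :=
  forall h, chi (tpow t n h - h) = 1.

(* the n x n matrix P with z at positions (1,n),(2,1),...,(n,n-1) (1-indexed);
   0-indexed: entry (i,j) is z iff i = (j+1) mod n. *)
Definition Pmx (C : fieldType) (n : nat) (z : C) : 'M[C]_n :=
  \matrix_(i, j) (if (i : nat) == ((j : nat).+1 %% n)%N then z else 0).

Definition mxpowz (C : fieldType) (n : nat) (A : 'M[C]_n) (j : int) : 'M[C]_n :=
  match j with
  | Posz k => iter k (mulmx A) 1%:M
  | Negz k => iter k.+1 (mulmx (invmx A)) 1%:M
  end.

(* alpha_{(n,chi)} (j,h) = P^j diag(chi(h), chi(th), ..., chi(t^{n-1}h)),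
   as a function on Z x| H = pi_K / pi_K^(2) (pairs (j,h)). *)
Definition alpha (H : zmodType) (C : fieldType) (t : H -> H) (n : nat)
    (chi : H -> C) (z : C) (g : int * H) : 'M[C]_n :=
  mxpowz (Pmx n z) g.1 *m diag_mx (\row_(i < n) chi (tpow t i g.2)).
Arguments alpha {H C} t n chi z g.

(* Kronecker (tensor) product of matrices; basis e_i (x) f_j indexed via the
   standard bijection 'I_(m1*m2) <-> 'I_m1 * 'I_m2 used by mxvec. *)
Definition kronmx (C : fieldType) (m1 n1 m2 n2 : nat)
    (A : 'M[C]_(m1, n1)) (B : 'M[C]_(m2, n2)) : 'M[C]_(m1 * m2, n1 * n2) :=
  \matrix_(k, l)
    (let ki := enum_val (cast_ord (esym (mxvec_cast m1 m2)) k) in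
     let lj := enum_val (cast_ord (esym (mxvec_cast n1 n2)) l) in
     A ki.1 lj.1 * B ki.2 lj.2).

Definition rep_iso (G : Type) (C : fieldType) (n : nat)
    (rho1 rho2 : G -> 'M[C]_n) : Prop :=
  exists2 A : 'M[C]_n, A \in unitmx & forall g, A *m rho1 g = rho2 g *m A.

From HB Require Import structures.
From mathcomp Require Import all_boot all_order all_algebra perm.
Import Order.TTheory GRing.Theory Num.Theory.
Local Open Scope ring_scope.

(* Write n = k1 k2 and P_k = Pmx k z_k.  Sending the basis vector e_c of C^n
   (c : 'I_n) to e_(c mod k1) (x) f_(c mod k2) is, by the Chinese remainder
   theorem, a bijection of bases [crt]; twisted by diag(w^c) with
   w = z/(z1 z2), its matrix A = [crt_mx w] is the intertwiner. *)

Definition kron_split (m n : nat) (k : 'I_(m * n)) : 'I_m * 'I_n :=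
  enum_val (cast_ord (esym (mxvec_cast m n)) k).
Definition kron_join (m n : nat) (p : 'I_m * 'I_n) : 'I_(m * n) :=
  cast_ord (mxvec_cast m n) (enum_rank p).
Arguments kron_split {m n}.
Arguments kron_join {m n}.

Lemma kron_splitK m n : cancel (@kron_split m n) kron_join.
Proof. by move=> k; rewrite /kron_split /kron_join enum_valK cast_ordKV. Qed.

Lemma kron_joinK m n : cancel (@kron_join m n) kron_split.
Proof. by move=> p; rewrite /kron_split /kron_join cast_ordK enum_rankK. Qed.

Section KroneckerProduct.
Variable C : fieldType.

Lemma kronE m1 n1 m2 n2 (A : 'M[C]_(m1, n1)) (B : 'M[C]_(m2, n2)) k l :
  kronmx A B k l = A (kron_split k).1 (kron_split l).1
                   * B (kron_split k).2 (kron_split l).2.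
Proof. by rewrite /kronmx mxE. Qed.

Lemma kron_mul m1 n1 p1 m2 n2 p2 (A : 'M[C]_(m1, n1)) (B : 'M[C]_(n1, p1))
    (A' : 'M[C]_(m2, n2)) (B' : 'M[C]_(n2, p2)) :
  kronmx (A *m B) (A' *m B') = kronmx A A' *m kronmx B B'.
Proof.
apply/matrixP => k l; rewrite kronE !mxE big_distrlr /= pair_bigA /=.
rewrite (reindex kron_split (onW_bij _ (Bijective (@kron_splitK n1 n2)
  (@kron_joinK n1 n2)))) /=.
by apply: eq_bigr => x _; rewrite !kronE mulrACA.
Qed.

Lemma kron1 m n : kronmx (1%:M : 'M[C]_m) (1%:M : 'M[C]_n) = 1%:M.
Proof.
apply/matrixP => k l; rewrite kronE !mxE -natrM mulnb.
rewrite -(can_eq (@kron_splitK m n) k l).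
by case: (kron_split k) (kron_split l) => [a b] [c d].
Qed.

Lemma kron_diag m n (d1 : 'rV[C]_m) (d2 : 'rV[C]_n) :
  kronmx (diag_mx d1) (diag_mx d2) =
  diag_mx (\row_k (d1 0 (kron_split k).1 * d2 0 (kron_split k).2)).
Proof.
apply/matrixP => k l; rewrite kronE !mxE -(can_eq (@kron_splitK m n) k l).
case: (kron_split k) (kron_split l) => [a b] [c e] /=; rewrite xpair_eqE.
by case: eqP => [->|_]; case: eqP => [->|_];
  rewrite ?mulr0n ?mul0r ?mulr0 ?mulr1n.
Qed.

Lemma kron_mxV {m n} {X : 'M[C]_m} {Y : 'M[C]_n} :
  X \in unitmx -> Y \in unitmx ->
  kronmx X Y *m kronmx (invmx X) (invmx Y) = 1%:M.
Proof. by move=> uX uY; rewrite -kron_mul !mulmxV // kron1. Qed.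

Lemma kron_unitmx {m n} {X : 'M[C]_m} {Y : 'M[C]_n} :
  X \in unitmx -> Y \in unitmx -> kronmx X Y \in unitmx.
Proof. by move=> uX uY; case: (mulmx1_unit (kron_mxV uX uY)). Qed.

Lemma kron_invmx m n (X : 'M[C]_m) (Y : 'M[C]_n) :
  X \in unitmx -> Y \in unitmx ->
  kronmx (invmx X) (invmx Y) = invmx (kronmx X Y).
Proof.
move=> uX uY; rewrite -[LHS]mul1mx -(mulVmx (kron_unitmx uX uY)).
by rewrite -mulmxA kron_mxV // mulmx1.
Qed.

Lemma kron_iter m n (X : 'M[C]_m) (Y : 'M[C]_n) k :
  kronmx (iter k (mulmx X) 1%:M) (iter k (mulmx Y) 1%:M)
  = iter k (mulmx (kronmx X Y)) 1%:M.
Proof. by elim: k => [|k IHk] /=; rewrite ?kron1 // kron_mul IHk. Qed.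

Lemma kron_mxpowz m n (X : 'M[C]_m) (Y : 'M[C]_n) j :
  X \in unitmx -> Y \in unitmx ->
  kronmx (mxpowz X j) (mxpowz Y j) = mxpowz (kronmx X Y) j.
Proof.
by move=> uX uY; case: j => k; rewrite /mxpowz kron_iter ?kron_invmx.
Qed.

End KroneckerProduct.

Section MatrixPowers.
Variable C : fieldType.

Lemma mxpowz_intertwine n (A X Y : 'M[C]_n) j :
  X \in unitmx -> Y \in unitmx -> A *m X = Y *m A ->
  A *m mxpowz X j = mxpowz Y j *m A.
Proof.
move=> uX uY AXY.
have iter_intertwine (X' Y' : 'M[C]_n) k : A *m X' = Y' *m A ->
    A *m iter k (mulmx X') 1%:M = iter k (mulmx Y') 1%:M *m A.
  move=> AXY'; elim: k => [|k IHk] /=; first by rewrite mulmx1 mul1mx.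
  by rewrite mulmxA AXY' -mulmxA IHk mulmxA.
have AXYV : A *m invmx X = invmx Y *m A.
  rewrite -[RHS]mulmx1 -(mulmxV uX) !mulmxA -(mulmxA _ A) AXY mulmxA.
  by rewrite mulVmx // mul1mx.
by case: j => k; apply: iter_intertwine.
Qed.

End MatrixPowers.
Arguments mxpowz_intertwine {C n A X Y} j.

Section CyclicShiftMatrix.
Variable C : fieldType.

Lemma Pmx_ordS n (z : C) (i j : 'I_n) : Pmx n z (ordS i) j = z * (i == j)%:R.
Proof.
rewrite mxE (_ : (_ == _.+1 %% n)%N = (ordS i == ordS j)) //.
by rewrite (inj_eq (@ordS_inj n)); case: eqP; rewrite ?mulr1 ?mulr0.
Qed.

Lemma mul_Pmx_ordS n (z : C) p (M : 'M[C]_(n, p)) i l :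
  (Pmx n z *m M) (ordS i) l = z * M i l.
Proof.
rewrite mxE (bigD1 i) //= Pmx_ordS eqxx mulr1 big1 ?addr0 // => j ji.
by rewrite Pmx_ordS eq_sym (negPf ji) mulr0 mul0r.
Qed.

(* P is z times a permutation matrix, hence invertible for z != 0. *)
Lemma Pmx_unit n (z : C) : z != 0 -> Pmx n z \in unitmx.
Proof.
move=> z_neq0; pose s := perm (@ordS_inj n).
have -> : Pmx n z = z *: (perm_mx s)^T.
  apply/matrixP => i j; rewrite !mxE permE -val_eqE /= eq_sym.
  by case: eqP; rewrite ?mulr1 ?mulr0.
by rewrite unitmxZ ?unitfE // unitmx_tr unitmx_perm.
Qed.

End CyclicShiftMatrix.

Lemma root_sign_neq0 {C : fieldType} {x : C} {k m : nat} :
  (0 < k)%N -> x ^+ k = (-1) ^+ m -> x != 0.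
Proof.
move=> k_gt0 xk; apply/negP => /eqP x0; move: (signr_eq0 C m).
by rewrite -xk x0 expr0n gtn_eqF // eqxx.
Qed.

(* For coprime k1, k2 the signs of the defining equations of z1, z2 and z
   agree, so (z1 z2)^(k1 k2) = z^(k1 k2). *)
Lemma coprime_sign_roots {C : fieldType} {k1 k2 : nat} {z1 z2 z : C} :
  coprime k1 k2 ->
  z1 ^+ k1 = (-1) ^+ k1.+1 -> z2 ^+ k2 = (-1) ^+ k2.+1 ->
  z ^+ (k1 * k2) = (-1) ^+ (k1 * k2).+1 ->
  (z1 * z2) ^+ (k1 * k2) = z ^+ (k1 * k2).
Proof.
move=> co ez1 ez2 ez.
have odd_k12 : odd k1 || odd k2.
  apply: contraT; rewrite negb_or -!dvdn2 => /andP[ev1 ev2].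
  by move: (dvdn_gcd 2 k1 k2); rewrite (eqP co) ev1 ev2.
rewrite ez exprMn exprM [in z2 ^+ _]mulnC exprM ez1 ez2 -!exprM -exprD.
rewrite -[LHS]signr_odd -[RHS]signr_odd oddD !(oddM, oddS).
by case: (odd k1) (odd k2) odd_k12 => [] [].
Qed.

Definition ord_mod (k : nat) (k_gt0 : (0 < k)%N) (c : nat) : 'I_k :=
  Ordinal (ltn_pmod c k_gt0).
Arguments ord_mod {k}.

Lemma ord_mod_ordS n k (k_gt0 : (0 < k)%N) (c : 'I_n) :
  (k %| n)%N -> ord_mod k_gt0 (ordS c) = ordS (ord_mod k_gt0 c).
Proof.
move=> kn; apply: val_inj => /=.
by rewrite (modn_dvdm _ kn) -[c.+1]addn1 -[(c %% k).+1]addn1 modnDml.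
Qed.

Section CRTIntertwiner.
Variables (C : fieldType) (k1 k2 : nat).
Hypotheses (k1_gt0 : (0 < k1)%N) (k2_gt0 : (0 < k2)%N) (co_k12 : coprime k1 k2).

Definition crt_split (c : 'I_(k1 * k2)) : 'I_k1 * 'I_k2 :=
  (ord_mod k1_gt0 c, ord_mod k2_gt0 c).
Definition crt (c : 'I_(k1 * k2)) : 'I_(k1 * k2) := kron_join (crt_split c).

Lemma crt_inj : injective crt.
Proof.
move=> c c' /(can_inj (@kron_joinK _ _)) [e1 e2].
apply: val_inj => /=.
rewrite -(modn_small (ltn_ord c)) -(modn_small (ltn_ord c')).
by apply/eqP; rewrite chinese_remainder // e1 e2 !eqxx.
Qed.

Lemma crt_ordS (c : 'I_(k1 * k2)) :
  crt_split (ordS c) = (ordS (crt_split c).1, ordS (crt_split c).2).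
Proof.
rewrite /crt_split !ord_mod_ordS //; [exact: dvdn_mull | exact: dvdn_mulr].
Qed.

Definition crt_mx (w : C) : 'M[C]_(k1 * k2) :=
  diag_mx (\row_c w ^+ c) *m perm_mx (perm crt_inj).

Lemma mul_crt_mx w p (M : 'M[C]_(k1 * k2, p)) c l :
  (crt_mx w *m M) c l = w ^+ c * M (crt c) l.
Proof. by rewrite -mulmxA -row_permE mul_diag_mx !mxE permE. Qed.

Lemma crt_mxE w c l : crt_mx w c l = w ^+ c * (crt c == l)%:R.
Proof. by rewrite -[crt_mx w]mulmx1 mul_crt_mx mxE. Qed.

Lemma crt_mx_unit w : w != 0 -> crt_mx w \in unitmx.
Proof.
move=> w_neq0; rewrite unitmx_mul unitmx_perm andbT unitmxE det_diag unitfE.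
by apply/prodf_neq0 => c _; rewrite mxE expf_neq0.
Qed.

Lemma crt_mx_diag w (d1 : 'rV[C]_k1) (d2 : 'rV[C]_k2) :
  crt_mx w *m kronmx (diag_mx d1) (diag_mx d2) =
  diag_mx (\row_c (d1 0 (ord_mod k1_gt0 c) * d2 0 (ord_mod k2_gt0 c)))
    *m crt_mx w.
Proof.
apply/matrixP => c l; rewrite mul_crt_mx mul_diag_mx [RHS]mxE crt_mxE.
rewrite kron_diag !mxE /crt kron_joinK.
by case: eqP => _; rewrite ?mulr1n ?mulr0n ?mulr1 ?mulr0 // mulrC.
Qed.

Lemma crt_mx_shift w z1 z2 z :
  w ^+ (k1 * k2) = 1 -> w * (z1 * z2) = z ->
  crt_mx w *m kronmx (Pmx k1 z1) (Pmx k2 z2) = Pmx (k1 * k2) z *m crt_mx w.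
Proof.
move=> w_root wz; apply/matrixP => c l.
rewrite -[c](ord_predK c); move: (ord_pred c) => {}c.
rewrite mul_crt_mx mul_Pmx_ordS crt_mxE kronE kron_joinK crt_ordS !Pmx_ordS.
rewrite -(can_eq (@kron_splitK _ _)) kron_joinK.
case: (crt_split c) (kron_split l) => [a b] [a' b'] /=; rewrite xpair_eqE.
have -> : w ^+ (ordS c) = w * w ^+ c by rewrite /= expr_mod // exprS.
case: eqP => _; case: eqP => _; rewrite /= ?(mulr0, mul0r, mulr1) //.
by rewrite -wz mulrAC.
Qed.

End CRTIntertwiner.
Arguments crt_mx {C k1 k2}.
Arguments crt_mx_shift {C k1 k2 k1_gt0 k2_gt0 co_k12 w z1 z2 z}.

Lemma character_tpow_mod {C : fieldType} {H : zmodType} {t : H -> H}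
    {k : nat} {chi : H -> C} :
  is_character chi -> factors_through t k chi ->
  forall c h, chi (tpow t c h) = chi (tpow t (c %% k) h).
Proof.
move=> [chiD _] chi_k c h.
have chi_tk y : chi (tpow t k y) = chi y.
  by rewrite -[tpow t k y](subrK y) chiD chi_k mul1r.
rewrite {1}(divn_eq c k); elim: (c %/ k)%N => [|q IHq]; first by rewrite mul0n.
by rewrite mulSn -addnA /tpow iterD chi_tk.
Qed.

Theorem proposition4 (C : numClosedFieldType) (H : zmodType) (t tinv : H -> H)
  (k1 k2 : nat) (chi1 chi2 : H -> C) (z1 z2 z : C) :
  laurent_module t tinv ->
  (0 < k1)%N -> (0 < k2)%N -> coprime k1 k2 ->
  is_character chi1 -> is_character chi2 ->
  factors_through t k1 chi1 -> factors_through t k2 chi2 ->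
  z1 ^+ k1 = (-1) ^+ k1.+1 -> z2 ^+ k2 = (-1) ^+ k2.+1 ->
  z ^+ (k1 * k2) = (-1) ^+ (k1 * k2).+1 ->
  rep_iso
    (fun g : int * H => kronmx (alpha t k1 chi1 z1 g) (alpha t k2 chi2 z2 g))
    (alpha t (k1 * k2) (fun h => chi1 h * chi2 h) z).
Proof.
move=> _ k1_gt0 k2_gt0 co ch1 ch2 f1 f2 ez1 ez2 ez.
have z1_neq0 := root_sign_neq0 k1_gt0 ez1.
have z2_neq0 := root_sign_neq0 k2_gt0 ez2.
have z_neq0 : z != 0 by apply: root_sign_neq0 ez; rewrite muln_gt0 k1_gt0.
have z12_neq0 : z1 * z2 != 0 by rewrite mulf_neq0.
pose w := z / (z1 * z2).
have wz : w * (z1 * z2) = z by rewrite divfK.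
have w_root : w ^+ (k1 * k2) = 1.
  by rewrite exprMn exprVn (coprime_sign_roots co ez1 ez2 ez) divff ?expf_neq0.
exists (crt_mx k1_gt0 k2_gt0 co w).
  by apply: crt_mx_unit; rewrite mulf_neq0 ?invr_eq0.
move=> [j h]; rewrite /alpha /= kron_mul kron_mxpowz ?Pmx_unit // mulmxA.
rewrite (mxpowz_intertwine j _ _ (crt_mx_shift w_root wz));
  rewrite ?kron_unitmx ?Pmx_unit //.
rewrite -mulmxA crt_mx_diag mulmxA; congr (_ *m diag_mx _ *m _).
apply/rowP => c; rewrite !mxE.
by rewrite -(character_tpow_mod ch1 f1) -(character_tpow_mod ch2 f2).
Qed.
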